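(* For every integer $N\ge16$, \[ h(N)\le \lfloor\sqrt{N}\rfloor+\big\lfloor\sqrt{\lfloor\sqrt{N}\rfloor}\big\rfloor+2. \]
   Context: A finite set $A\subseteq\mathbb{Z}$ is Sidon if $a+b=c+d$ with $a,b,c,d\in A$ implies $\{a,b\}=\{c,d\}$ as unordered pairs. For a natural number $N$, $h(N)=\max\{|A| : A\subseteq\{1,\dots,N\},\ A\text{ Sidon}\}$. *)

From mathcomp Require Import all_boot.
Set Implicit Arguments. Unset Strict Implicit. Unset Printing Implicit Defensive.

Definition sidonb (N : nat) (A : {set 'I_N.+1}) : bool :=
  [forall a in A, forall b in A, forall c in A, forall d in A,
     (a + b == c + d)%N ==> ((a == c) && (b == d)) || ((a == d) && (b == c))].

(* Sidon subsets of {1,...,N}: sets of 'I_N.+1 avoiding 0. *)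
Definition sidon_in (N : nat) (A : {set 'I_N.+1}) : bool :=
  (ord0 \notin A) && sidonb A.

Definition h (N : nat) : nat :=
  \max_(A : {set 'I_N.+1} | sidon_in A) #|A|.

Definition isqrt (n : nat) : nat := \max_(k < n.+1 | k * k <= n) k.

From mathcomp Require Import all_boot zify.
Set Implicit Arguments. Unset Strict Implicit. Unset Printing Implicit Defensive.

(* Let a_0 < ... < a_(k-1) be a Sidon set in [1, N] and t <= k.  The differences
   a_(i+r) - a_i with 1 <= r <= t are pairwise distinct, since
   a_(i+r) - a_i = a_(j+q) - a_j means a_(i+r) + a_j = a_(j+q) + a_i.  There are
   M = sum_r (k - r) of them, so they sum to at least M(M+1)/2; for fixed r they
   telescope to (a_(k-r) + ... + a_(k-1)) - (a_0 + ... + a_(r-1)) <= r(N - 1), so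
   M(M+1) <= (N - 1) t(t+1).  With s = isqrt N and t = isqrt s this inequality
   fails as soon as k >= s + t + 3. *)

Lemma sorted_ltn_sumn_lower m (l : seq nat) :
  sorted ltn l -> all (fun x => m < x) l ->
  size l * (2 * m + size l).+1 <= 2 * sumn l.
Proof.
elim: l m => [//|x l IH] m /= x_path /andP[mx l_gt_m].
have l_gt_x : all (fun y => x < y) l := order_path_min ltn_trans x_path.
have := IH x (path_sorted x_path) l_gt_x; nia.
Qed.

Lemma uniq_sumn_lower (l : seq nat) :
  uniq l -> all (fun x => 0 < x) l -> size l * (size l).+1 <= 2 * sumn l.
Proof.
move=> l_uniq l_pos; have l_perm := permEl (perm_sort leq l).
rewrite -(perm_size l_perm) -(perm_sumn l_perm).
apply: (sorted_ltn_sumn_lower (m := 0)).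
  by rewrite ltn_sorted_uniq_leq sort_uniq l_uniq (sort_sorted leq_total).
by rewrite (perm_all _ l_perm).
Qed.

Lemma leq_sum_nat m n (F G : nat -> nat) :
  (forall i, m <= i < n -> F i <= G i) ->
  \sum_(m <= i < n) F i <= \sum_(m <= i < n) G i.
Proof.
move=> FG; rewrite big_nat_cond [leqRHS]big_nat_cond.
by apply: leq_sum => i /andP[/FG].
Qed.

Lemma sum_iota_double t : 2 * \sum_(1 <= r < t.+1) r = t * t.+1.
Proof.
elim: t => [|t IH]; first by rewrite big_geq.
rewrite big_nat_recr //= mulnDr IH; lia.
Qed.

Lemma sum_sub_iota_double k t : t <= k ->
  2 * \sum_(1 <= r < t.+1) (k - r) = t * (2 * k - t.+1).
Proof.
elim: t => [|t IH] tk; first by rewrite big_geq.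
rewrite big_nat_recr //= mulnDr IH; [nia | exact: ltnW].
Qed.

Lemma isqrt_maximal n j : j * j <= n -> j <= isqrt n.
Proof.
move=> jn; have j_lt : j < n.+1 by nia.
exact: (leq_bigmax_cond (F := fun i : 'I_n.+1 => nat_of_ord i) (Ordinal j_lt) jn).
Qed.

Lemma ltn_isqrtS_sqr n : n < (isqrt n).+1 * (isqrt n).+1.
Proof. by rewrite ltnNge; apply/negP => /isqrt_maximal; rewrite ltnn. Qed.

Definition sidon_seq (s : seq nat) : Prop :=
  forall a b c d, a \in s -> b \in s -> c \in s -> d \in s ->
    a + b = c + d -> (a = c /\ b = d) \/ (a = d /\ b = c).

Definition shift_diffs (s : seq nat) (t : nat) : seq nat :=
  [seq nth 0 s (i + r) - nth 0 s i | r <- index_iota 1 t.+1, i <- index_iota 0 (size s - r)].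

Lemma size_shift_diffs s t : size (shift_diffs s t) = \sum_(1 <= r < t.+1) (size s - r).
Proof.
rewrite size_allpairs_dep sumnE big_map; apply: eq_bigr => r _.
by rewrite size_iota subn0.
Qed.

Lemma sidon_in_seq N (A : {set 'I_N.+1}) : sidon_in A ->
  exists s, [/\ sorted ltn s, size s = #|A|, all (fun x => 0 < x <= N) s & sidon_seq s].
Proof.
case/andP=> A0 A_sidon; set s := sort leq [seq val x | x <- enum A].
have memA x : x \in s -> exists2 y, y \in A & x = val y.
  by rewrite mem_sort => /mapP[y]; rewrite mem_enum; exists y.
exists s; split.
- rewrite ltn_sorted_uniq_leq sort_uniq (map_inj_uniq val_inj) enum_uniq /=.
  exact: (sort_sorted leq_total).
- by rewrite size_sort size_map cardE.
- apply/allP => _ /memA[y yA ->]; rewrite -[_ <= N]ltnS ltn_ord andbT lt0n.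
  by apply: contraNneq A0 => y0; rewrite -(_ : y = ord0) //; apply: val_inj.
move=> _ _ _ _ /memA[x xA ->] /memA[y yA ->] /memA[z zA ->] /memA[w wA ->] /eqP E.
move/forall_inP: A_sidon => /(_ x xA) /forall_inP /(_ y yA) /forall_inP /(_ z zA)
  /forall_inP /(_ w wA) /implyP /(_ E).
by case/orP => /andP[/eqP -> /eqP ->]; [left | right].
Qed.

Section SortedSeq.
Variable s : seq nat.
Hypothesis s_sorted : sorted ltn s.
Local Notation a := (nth 0 s).
Local Notation k := (size s).

Lemma nth_sorted_ltn i j : i < j -> j < k -> a i < a j.
Proof.
move=> ij jk; apply: (sorted_ltn_nth ltn_trans 0 s_sorted) => //.
by rewrite inE (ltn_trans ij jk).
Qed.

Lemma nth_sorted_leq i j : i <= j -> j < k -> a i <= a j.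
Proof.
rewrite leq_eqVlt => /orP[/eqP -> // | ij jk].
exact/ltnW/nth_sorted_ltn.
Qed.

Lemma shift_diffs_pos t : all (fun x => 0 < x) (shift_diffs s t).
Proof.
apply/allP => _ /allpairsPdep [r [i [+ + ->]]]; rewrite !mem_index_iota => rt ik.
by rewrite subn_gt0 nth_sorted_ltn //; lia.
Qed.

Lemma uniq_shift_diffs t : sidon_seq s -> uniq (shift_diffs s t).
Proof.
move=> s_sidon; apply: allpairs_uniq_dep => [|r _|p1 p2]; try exact: iota_uniq.
move=> /allpairsPdep [r1 [i1 [+ + ->]]] /allpairsPdep [r2 [i2 [+ + ->]]] /=.
rewrite !mem_index_iota => r1t i1k r2t i2k.
have lt1 : a i1 < a (i1 + r1) by apply: nth_sorted_ltn; lia.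
have lt2 : a i2 < a (i2 + r2) by apply: nth_sorted_ltn; lia.
have inj i j : i < k -> j < k -> a i = a j -> i = j.
  have s_uniq : uniq s by move: s_sorted; rewrite ltn_sorted_uniq_leq => /andP[].
  by move=> ik jk /eqP; rewrite nth_uniq // => /eqP.
have mem i : i < k -> a i \in s by exact: mem_nth.
move=> diff_eq; have sum_eq : a (i1 + r1) + a i2 = a (i2 + r2) + a i1 by lia.
have [[top_eq bot_eq] | [] ] := s_sidon _ _ _ _ (mem (i1 + r1) ltac:(lia))
  (mem i2 ltac:(lia)) (mem (i2 + r2) ltac:(lia)) (mem i1 ltac:(lia)) sum_eq; try lia.
have ei : i2 = i1 by apply: inj; lia.
have er : r1 = r2 by move: top_eq; rewrite ei => /inj; lia.
by rewrite ei er.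
Qed.

Lemma sum_shift_diff_telescope r : r <= k ->
  \sum_(0 <= i < k - r) (a (i + r) - a i) + \sum_(0 <= j < r) a j
  = \sum_(k - r <= j < k) a j.
Proof.
move=> rk.
have split_diff : \sum_(0 <= i < k - r) (a (i + r) - a i) + \sum_(0 <= i < k - r) a i
    = \sum_(r <= j < k) a j.
  have -> : \sum_(r <= j < k) a j = \sum_(0 <= i < k - r) a (i + r).
    by rewrite -{1}(add0n r) big_addn.
  rewrite -big_split /=; apply: eq_big_nat => i ik.
  by rewrite subnK // nth_sorted_leq ?leq_addr //; lia.
have split_low : \sum_(0 <= j < k) a j = \sum_(0 <= j < r) a j + \sum_(r <= j < k) a j.
  exact: big_cat_nat.
have split_high :
    \sum_(0 <= j < k) a j = \sum_(0 <= j < k - r) a j + \sum_(k - r <= j < k) a j.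
  exact/big_cat_nat/leq_subr.
lia.
Qed.

Variable N : nat.
Hypothesis s_range : all (fun x => 0 < x <= N) s.

Lemma sum_shift_diff_le r : r <= k ->
  \sum_(0 <= i < k - r) (a (i + r) - a i) <= (N - 1) * r.
Proof.
move=> rk; have := sum_shift_diff_telescope rk.
have range i : i < k -> 0 < a i <= N by move=> ik; apply: (allP s_range); exact: mem_nth.
have low : \sum_(0 <= j < r) 1 <= \sum_(0 <= j < r) a j.
  by apply: leq_sum_nat => j /andP[_ jr]; case/andP: (range j (leq_trans jr rk)).
have high : \sum_(k - r <= j < k) a j <= \sum_(k - r <= j < k) N.
  by apply: leq_sum_nat => j /andP[_ jk]; case/andP: (range j jk).
rewrite !sum_nat_const_nat subKn // in low high.
nia.
Qed.

Lemma sumn_shift_diffs_le t : t <= k ->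
  2 * sumn (shift_diffs s t) <= (N - 1) * (t * t.+1).
Proof.
move=> tk; rewrite -sum_iota_double mulnCA leq_mul2l /= big_distrr /=.
rewrite sumnE big_allpairs_dep /=; apply: leq_sum_nat => r /andP[_ rt].
by apply: sum_shift_diff_le; lia.
Qed.

Theorem sidon_shift_diffs_bound t : sidon_seq s -> t <= k ->
  size (shift_diffs s t) * (size (shift_diffs s t)).+1 <= (N - 1) * (t * t.+1).
Proof.
move=> s_sidon tk.
apply: leq_trans (uniq_sumn_lower (uniq_shift_diffs t s_sidon) (shift_diffs_pos t)) _.
exact: sumn_shift_diffs_le.
Qed.

End SortedSeq.

Lemma shift_count_sqr_gt N s t k M : 0 < t -> s < t.+1 * t.+1 -> N < s.+1 * s.+1 ->
  s + t + 3 <= k -> 2 * M = t * (2 * k - t.+1) -> (N - 1) * (t * t.+1) < M * M.+1.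
Proof.
move=> t0 st Ns ks M2.
set Y := t * (2 * s + t + 5); set T := t * t.+1.
have key : 4 * (s * s + 2 * s) * T < Y * (Y + 2) + 4 * T.
  (* [s <= t^2 + 2t] gives [s^2 <= s t^2 + 2 s t], the only nonlinear estimate needed. *)
  have : s * s <= s * (t * t + 2 * t) by rewrite leq_mul2l; lia.
  rewrite /Y /T; nia.
have Y_le : Y <= 2 * M by rewrite /Y M2 leq_mul2l; lia.
have YM : Y * (Y + 2) <= 4 * (M * M.+1).
  have -> : 4 * (M * M.+1) = 2 * M * (2 * M + 2) by rewrite mulnS; lia.
  by apply: leq_mul; lia.
have NT : N * T <= (s * s + 2 * s) * T by apply: leq_mul; lia.
have -> : (N - 1) * T = N * T - T by rewrite mulnBl mul1n.
lia.
Qed.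

Theorem mainTheorem9 (N : nat) : 16 <= N ->
  h N <= isqrt N + isqrt (isqrt N) + 2.
Proof.
move=> N16; apply/bigmax_leqP => A /sidon_in_seq[s [s_sorted <- s_range s_sidon]].
set m := isqrt N; set t := isqrt m; rewrite leqNgt; apply/negP => s_large.
have {}s_large : m + t + 3 <= size s by lia.
have t_pos : 0 < t by apply: isqrt_maximal; apply: isqrt_maximal; lia.
have t_le : t <= size s by lia.
have := sidon_shift_diffs_bound s_sorted s_range s_sidon t_le.
apply/negP; rewrite -ltnNge.
apply: (shift_count_sqr_gt t_pos (ltn_isqrtS_sqr m) (ltn_isqrtS_sqr N) s_large).
by rewrite size_shift_diffs sum_sub_iota_double.
Qed.
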